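(* The set function $f:2^{[n-1]}\to\mathbb R$ is non-negative, non-decreasing and submodular.
   Context: Independent instance: each action $i\in[n]$ has a type drawn independently over types $j\in[m]$, type $j$ having probability $q_{ij}$, receiver value $\rho_{ij}$ and sender value $\xi_{ij}$. $\rho_E=\max_i\sum_jq_{ij}\rho_{ij}$. For $z\in[0,1]$, $g_i(z)=\max\{\sum_{j=1}^mx_{ij}\xi_{ij}:\sum_jx_{ij}\le z,\ \sum_jx_{ij}\rho_{ij}\ge\rho_E\sum_jx_{ij},\ x_{ij}\in[0,q_{ij}]\ \forall j\}$. For $S\subseteq[n-1]$, $f(S)=\max\{\sum_{i\in S\cup\{n\}}g_i(z_i):\sum_{i\in S\cup\{n\}}z_i\le1,\ z_i\ge0\ \forall i\in S\cup\{n\}\}$. *)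

From HB Require Import structures.
From mathcomp Require Import all_boot all_order all_algebra.
From mathcomp Require Import all_classical all_reals.
Set Implicit Arguments. Unset Strict Implicit. Unset Printing Implicit Defensive.
Import Order.TTheory GRing.Theory Num.Theory.
Local Open Scope ring_scope.
Local Open Scope classical_set_scope.

Section Defs.
Variables (R : realType) (n m : nat).
(* actions are 'I_n (action k+1 of the paper is ordinal k); types are 'I_m *)
Variables (q rho xi : 'I_n -> 'I_m -> R).

Definition rhoE : R :=
  sup [set r | exists i : 'I_n, r = \sum_(j < m) q i j * rho i j].

Definition gfun (i : 'I_n) (z : R) : R :=
  sup [set v | exists x : 'I_m -> R,
        [/\ \sum_(j < m) x j <= z,
            \sum_(j < m) x j * rho i j >= rhoE * \sum_(j < m) x j,
            (forall j, 0 <= x j /\ x j <= q i j) &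
            v = \sum_(j < m) x j * xi i j]].

(* the action n of the paper is the ordinal with value n.-1 *)
Definition is_last (i : 'I_n) : bool := val i == n.-1.

(* S ⊆ [n-1] : S does not contain the last action *)
Definition in_dom (S : {set 'I_n}) : Prop := forall i, i \in S -> ~~ is_last i.

Definition withlast (S : {set 'I_n}) : {set 'I_n} := S :|: [set i | is_last i].

Definition ffun_set (S : {set 'I_n}) : R :=
  sup [set v | exists z : 'I_n -> R,
        [/\ \sum_(i in withlast S) z i <= 1,
            (forall i, i \in withlast S -> 0 <= z i) &
            v = \sum_(i in withlast S) gfun i (z i)]].
End Defs.

(* The proof separates the two layers of the definition of f.
   1. Each g_i is the value of a linear program whose right-hand side z enters
      linearly; hence g_i is non-negative, bounded above and concave on
      [0, +oo): a convex combination of feasible x's is feasible for the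
      convex combination of the budgets.
   2. For ANY family g_i with these three properties, the optimal value
      F(A) = sup { sum_(i in A) g_i(z_i) | z >= 0, sum_(i in A) z_i <= 1 }
      is non-negative, monotone and submodular in the index set A.
      Submodularity is an exchange argument: from allocations z on A u B and
      w on A n B one builds allocations on A and on B by mixing z and w on
      A n B with complementary weights t and 1 - t; concavity makes the total
      value increase, and a suitable t keeps both budgets below 1.
   Since f(S) = F(S u {n}) and S |-> S u {n} commutes with union and
   intersection, the theorem follows. *)
From HB Require Import structures.
From mathcomp Require Import all_boot all_order all_algebra.
From mathcomp Require Import all_classical all_reals.
From mathcomp Require Import ring lra.
Set Implicit Arguments. Unset Strict Implicit. Unset Printing Implicit Defensive.
Import Order.TTheory GRing.Theory Num.Theory.
Local Open Scope ring_scope.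

Lemma sup2_le (R : realType) (E1 E2 : set R) (a b c : R) :
  0 <= a -> 0 <= b -> has_sup E1 -> has_sup E2 ->
  (forall x y, E1 x -> E2 y -> a * x + b * y <= c) ->
  a * sup E1 + b * sup E2 <= c.
Proof.
move=> a0 b0 supE1 supE2 hE; apply/ler_addgt0Pr => e e0.
set e' := e / (a + b + 1).
have e'0 : 0 < e' by apply: divr_gt0 => //; lra.
have he : (a + b + 1) * e' = e by rewrite /e' mulrC divfK //; lra.
have [x E1x hx] := sup_adherent e'0 supE1.
have [y E2y hy] := sup_adherent e'0 supE2.
have hxy := hE _ _ E1x E2y.
have h1 : a * sup E1 <= a * x + a * e' by rewrite -mulrDr ler_wpM2l //; lra.
have h2 : b * sup E2 <= b * y + b * e' by rewrite -mulrDr ler_wpM2l //; lra.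
nra.
Qed.

Definition concave_on_nonneg (R : realType) (h : R -> R) : Prop :=
  forall z w t, 0 <= z -> 0 <= w -> 0 <= t <= 1 ->
  (1 - t) * h z + t * h w <= h ((1 - t) * z + t * w).

Lemma concave_mix2 (R : realType) (h : R -> R) (z w t : R) :
  concave_on_nonneg h -> 0 <= z -> 0 <= w -> 0 <= t <= 1 ->
  h z + h w <= h ((1 - t) * z + t * w) + h (t * z + (1 - t) * w).
Proof.
move=> hc z0 w0 t01.
have t01' : 0 <= 1 - t <= 1 by move: t01 => /andP[? ?]; apply/andP; lra.
have c1 := hc z w t z0 w0 t01.
have c2 := hc z w (1 - t) z0 w0 t01'.
rewrite opprB addrCA subrr addr0 in c2.
lra.
Qed.

Lemma mixing_weight (R : realType) (X Y D : R) :
  X <= 1 -> Y <= 1 -> X + Y + D <= 2 ->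
  exists2 t, 0 <= t <= 1 & X + t * D <= 1 /\ Y + (1 - t) * D <= 1.
Proof.
move=> X1 Y1 XYD.
have [D0 | D0] := lerP D 0.
  by exists 0; [rewrite lexx ler01 | split; nra].
have [XD1 | XD1] := lerP (X + D) 1.
  by exists 1; [rewrite lexx ler01 | split; lra].
have tD : (1 - X) / D * D = 1 - X by rewrite divfK // gt_eqF.
exists ((1 - X) / D).
  by apply/andP; split; [apply: divr_ge0; lra | rewrite ler_pdivrMr //; lra].
by split; [lra | rewrite mulrBl mul1r tD; lra].
Qed.

Section SetSums.
Variables (R : realType) (I : finType).

Lemma sum_setUI (A B : {set I}) (F : I -> R) :
  \sum_(i in A :|: B) F i + \sum_(i in A :&: B) F i =
  \sum_(i in A) F i + \sum_(i in B) F i.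
Proof.
rewrite !(big_mkcond (fun i => i \in _)) -!big_split /=.
by apply: eq_bigr => i _; rewrite !inE; case: (i \in A); case: (i \in B);
  rewrite /= ?addr0 ?add0r.
Qed.

Lemma sum_subset_le (A B : {set I}) (F : I -> R) :
  A \subset B -> (forall i, i \in B :\: A -> 0 <= F i) ->
  \sum_(i in A) F i <= \sum_(i in B) F i.
Proof.
move=> sAB F0; rewrite [leRHS](big_setID A) /= (finset.setIidPr sAB) lerDl.
exact: sumr_ge0.
Qed.

Lemma sum_patch (A B : {set I}) (u v : I -> R) :
  \sum_(i in A) (if i \in B then u i else v i) =
  \sum_(i in A) v i + \sum_(i in A :&: B) (u i - v i).
Proof.
rewrite !(big_mkcond (fun i => i \in _)) -big_split /=.
by apply: eq_bigr => i _; rewrite !inE; case: (i \in A); case: (i \in B);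
  rewrite /= ?addr0 // addrC subrK.
Qed.
End SetSums.

Section SeparableAllocation.
Variables (R : realType) (I : finType) (g : I -> R -> R).
Hypothesis g0_ge0 : forall i, 0 <= g i 0.
Hypothesis g_bounded : forall i, exists M, forall z, 0 <= z -> g i z <= M.
Hypothesis g_concave : forall i, concave_on_nonneg (g i).

Definition feasible (A : {set I}) (z : I -> R) : Prop :=
  \sum_(i in A) z i <= 1 /\ (forall i, i \in A -> 0 <= z i).

Definition value (A : {set I}) (z : I -> R) : R := \sum_(i in A) g i (z i).

Definition alloc_values (A : {set I}) : set R :=
  [set v | exists z : I -> R,
     [/\ \sum_(i in A) z i <= 1, (forall i, i \in A -> 0 <= z i) &
         v = \sum_(i in A) g i (z i)]].

Definition alloc_max (A : {set I}) : R := sup (alloc_values A).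

Lemma feasible0 A : feasible A (fun _ => 0).
Proof. by split => //; rewrite big1. Qed.

Lemma alloc_values_has_sup A : has_sup (alloc_values A).
Proof.
split.
  exists (value A (fun _ => 0)), (fun _ => 0).
  by split => //; rewrite big1.
have /fin_all_exists [M hM] := g_bounded.
exists (\sum_(i in A) M i) => v [z [_ z0 ->]].
by apply: ler_sum => i iA; apply: hM; apply: z0.
Qed.

Lemma alloc_max_ub A z : feasible A z -> value A z <= alloc_max A.
Proof.
move=> [z1 z0]; apply: ub_le_sup; first by case: (alloc_values_has_sup A).
by exists z.
Qed.

Lemma alloc_max_least A c :
  (forall z, feasible A z -> value A z <= c) -> alloc_max A <= c.
Proof.
move=> hc; apply: ge_sup; first by case: (alloc_values_has_sup A).
by move=> v [z [z1 z0 ->]]; apply: hc.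
Qed.

Lemma alloc_max_ge0 A : 0 <= alloc_max A.
Proof.
apply: le_trans (alloc_max_ub (feasible0 A)).
by apply: sumr_ge0 => i _; apply: g0_ge0.
Qed.

(* Extending an allocation by zero gives monotonicity. *)
Lemma alloc_max_mono (A B : {set I}) : A \subset B -> alloc_max A <= alloc_max B.
Proof.
move=> sAB; apply: alloc_max_least => z [z1 z0].
pose z' i := if i \in A then z i else 0.
have z'_feas : feasible B z'.
  split; last by move=> i _; rewrite /z'; case: ifP => // /z0.
  rewrite sum_patch big1 // add0r (finset.setIidPr sAB).
  by under eq_bigr do rewrite subr0.
apply: le_trans (alloc_max_ub z'_feas).
have -> : value A z = value A z' by apply: eq_bigr => i iA; rewrite /z' iA.
apply: sum_subset_le => // i /setDP[_ iA].
by rewrite /z' (negbTE iA); apply: g0_ge0.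
Qed.

Lemma exchange_value (A B : {set I}) (z w : I -> R) (t : R) :
  0 <= t <= 1 -> feasible (A :|: B) z -> feasible (A :&: B) w ->
  value (A :|: B) z + value (A :&: B) w <=
  value A (fun i => if i \in B then (1 - t) * z i + t * w i else z i) +
  value B (fun i => if i \in A then t * z i + (1 - t) * w i else z i).
Proof.
move=> t01 [_ z0] [_ w0].
rewrite /value !(big_mkcond (fun i => i \in _)) -!big_split /=.
apply: ler_sum => i _; have := z0 i; have := w0 i; rewrite !inE.
case: (i \in A); case: (i \in B) => //= w0i z0i; rewrite ?addr0 ?add0r //.
exact: concave_mix2 (g_concave i) (z0i isT) (w0i isT) t01.
Qed.

Lemma exchange (A B : {set I}) (z w : I -> R) :
  feasible (A :|: B) z -> feasible (A :&: B) w ->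
  exists a b, [/\ feasible A a, feasible B b &
     value (A :|: B) z + value (A :&: B) w <= value A a + value B b].
Proof.
move=> zf wf; have [z1 z0] := zf; have [w1 w0] := wf.
set D := \sum_(i in A :&: B) (w i - z i).
have z0A : forall i, i \in (A :|: B) :\: A -> 0 <= z i.
  by move=> i /setDP[/z0].
have z0B : forall i, i \in (A :|: B) :\: B -> 0 <= z i.
  by move=> i /setDP[/z0].
have zA1 : \sum_(i in A) z i <= 1.
  by apply: le_trans _ z1; exact: sum_subset_le (finset.subsetUl _ _) z0A.
have zB1 : \sum_(i in B) z i <= 1.
  by apply: le_trans _ z1; exact: sum_subset_le (finset.subsetUr _ _) z0B.
have zAB2 : \sum_(i in A) z i + \sum_(i in B) z i + D <= 2.
  by rewrite -sum_setUI /D sumrB; lra.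
have [t t01 [tA tB]] := mixing_weight zA1 zB1 zAB2.
have mix_ge0 : forall i s, 0 <= s <= 1 -> i \in A :&: B ->
    0 <= (1 - s) * z i + s * w i.
  move=> i s /andP[s0 s1] iAB; have /setIP[iA _] := iAB.
  have zi0 : 0 <= z i by apply: z0; rewrite inE iA.
  have wi0 := w0 i iAB.
  by apply: addr_ge0; apply: mulr_ge0 => //; lra.
do 2 eexists; split; last exact: exchange_value t01 zf wf.
- split.
    rewrite sum_patch (_ : \sum_(i in A :&: B) _ = t * D) //.
    by rewrite /D mulr_sumr; apply: eq_bigr => i _; ring.
  move=> i iA; case: ifP => iB; last by apply: z0; rewrite inE iA.
  by apply: mix_ge0 => //; apply/setIP.
- split.
    rewrite sum_patch finset.setIC (_ : \sum_(i in A :&: B) _ = (1 - t) * D) //.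
    by rewrite /D mulr_sumr; apply: eq_bigr => i _; ring.
  move=> i iB; case: ifP => iA; last by apply: z0; rewrite inE iB orbT.
  have t01' : 0 <= 1 - t <= 1 by move: t01 => /andP[? ?]; apply/andP; lra.
  have := mix_ge0 i (1 - t) t01' ltac:(by apply/setIP).
  by rewrite opprB addrCA subrr addr0.
Qed.

Lemma alloc_max_submod (A B : {set I}) :
  alloc_max (A :|: B) + alloc_max (A :&: B) <= alloc_max A + alloc_max B.
Proof.
rewrite -[alloc_max (A :|: B)]mul1r -[alloc_max (A :&: B)]mul1r.
apply: sup2_le; rewrite ?ler01 //; try exact: alloc_values_has_sup.
move=> _ _ [z [z1 z0 ->]] [w [w1 w0 ->]]; rewrite !mul1r.
have [a [b [fa fb hab]]] := exchange (conj z1 z0) (conj w1 w0).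
by apply: le_trans hab _; apply: lerD; apply: alloc_max_ub.
Qed.
End SeparableAllocation.

Section LinearProgramValue.
Variables (R : realType) (n m : nat) (q rho xi : 'I_n -> 'I_m -> R).
Hypothesis q_ge0 : forall i j, 0 <= q i j.

Definition g_values (i : 'I_n) (z : R) : set R :=
  [set v | exists x : 'I_m -> R,
     [/\ \sum_(j < m) x j <= z,
         \sum_(j < m) x j * rho i j >= rhoE q rho * \sum_(j < m) x j,
         (forall j, 0 <= x j /\ x j <= q i j) &
         v = \sum_(j < m) x j * xi i j]].

Lemma gfunE i z : gfun q rho xi i z = sup (g_values i z).
Proof. by []. Qed.

Lemma g_values0 i z : 0 <= z -> g_values i z 0.
Proof.
move=> z0; exists (fun _ => 0); split; rewrite ?big1 ?mulr0 //.
- by move=> j _; rewrite mul0r.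
- by move=> j _; rewrite mul0r.
Qed.

(* Since 0 <= x <= q, every objective value is at most sum_j q_ij |xi_ij|. *)
Lemma g_values_ub i z v :
  g_values i z v -> v <= \sum_(j < m) q i j * `|xi i j|.
Proof.
case=> x [_ _ x0q ->]; apply: ler_sum => j _; have [x0 xq] := x0q j.
apply: le_trans (ler_norm _) _; rewrite normrM (ger0_norm x0).
by rewrite ler_wpM2r.
Qed.

Lemma g_values_has_sup i z : 0 <= z -> has_sup (g_values i z).
Proof.
move=> z0; split; first by exists 0; exact: g_values0.
by exists (\sum_(j < m) q i j * `|xi i j|) => v /g_values_ub.
Qed.

Lemma gfun_ge0 i z : 0 <= z -> 0 <= gfun q rho xi i z.
Proof.
move=> z0; rewrite gfunE.
by apply: ub_le_sup; [case: (g_values_has_sup i z0) | exact: g_values0].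
Qed.

Lemma gfun_bounded i : exists M, forall z, 0 <= z -> gfun q rho xi i z <= M.
Proof.
exists (\sum_(j < m) q i j * `|xi i j|) => z z0; rewrite gfunE.
by apply: ge_sup => [|v /g_values_ub]; first by exists 0; exact: g_values0.
Qed.

(* The constraints are linear in (x, z), so the convex combination of
   feasible solutions for budgets z and w is feasible for the combined
   budget, with the combined objective value. *)
Lemma gfun_concave i : concave_on_nonneg (gfun q rho xi i).
Proof.
move=> z w t z0 w0 /andP[t0 t1].
have zw0 : 0 <= (1 - t) * z + t * w.
  by apply: addr_ge0; apply: mulr_ge0 => //; lra.
rewrite !gfunE; apply: sup2_le; rewrite ?subr_ge0 //; try exact: g_values_has_sup.
move=> _ _ [x [x1 x2 x3 ->]] [y [y1 y2 y3 ->]].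
apply: ub_le_sup; first by case: (g_values_has_sup i zw0).
exists (fun j => (1 - t) * x j + t * y j); split.
- rewrite big_split /= -!mulr_sumr.
  by apply: lerD; apply: ler_wpM2l => //; lra.
- rewrite big_split /= -!mulr_sumr.
  under eq_bigr do rewrite mulrDl -!mulrA.
  rewrite big_split /= -!mulr_sumr mulrDr (mulrCA _ (1 - t)) (mulrCA _ t).
  by apply: lerD; apply: ler_wpM2l => //; lra.
- move=> j; have [x0 xq] := x3 j; have [y0 yq] := y3 j; split.
    by apply: addr_ge0; apply: mulr_ge0 => //; lra.
  have -> : q i j = (1 - t) * q i j + t * q i j by ring.
  by apply: lerD; apply: ler_wpM2l => //; lra.
- rewrite !mulr_sumr -big_split /=; apply: eq_bigr => j _; ring.
Qed.
End LinearProgramValue.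

Lemma ffun_setE (R : realType) (n m : nat) (q rho xi : 'I_n -> 'I_m -> R) S :
  ffun_set q rho xi S = alloc_max (gfun q rho xi) (withlast S).
Proof. by []. Qed.

Lemma withlastU n (S T : {set 'I_n}) :
  withlast (S :|: T) = withlast S :|: withlast T.
Proof. by rewrite /withlast finset.setUACA finset.setUid. Qed.

Lemma withlastI n (S T : {set 'I_n}) :
  withlast (S :&: T) = withlast S :&: withlast T.
Proof. by rewrite /withlast finset.setUIl. Qed.

Lemma withlastS n (S T : {set 'I_n}) :
  S \subset T -> withlast S \subset withlast T.
Proof. by move=> sST; rewrite /withlast finset.setSU. Qed.

Theorem lemma4p3 (R : realType) (n m : nat) (q rho xi : 'I_n -> 'I_m -> R) :
  (0 < n)%N ->
  (forall i j, 0 <= q i j) ->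
  (forall i, \sum_(j < m) q i j = 1) ->
  let f := ffun_set q rho xi in
  (forall S, in_dom S -> 0 <= f S) /\
  (forall S T, in_dom S -> in_dom T -> S \subset T -> f S <= f T) /\
  (forall S T, in_dom S -> in_dom T -> f (S :|: T) + f (S :&: T) <= f S + f T).
Proof.
move=> _ q_ge0 _ f.
have g0 i : 0 <= gfun q rho xi i 0 by exact: gfun_ge0.
have gb := gfun_bounded rho xi q_ge0.
have gc := gfun_concave rho xi q_ge0.
split; first by move=> S _; rewrite /f ffun_setE; exact: alloc_max_ge0.
split=> S T _ _.
  by move=> sST; rewrite /f !ffun_setE; apply: alloc_max_mono => //; exact: withlastS.
by rewrite /f !ffun_setE withlastU withlastI; exact: alloc_max_submod.
Qed.
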